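(* (a) The Lie superalgebra $\mathfrak g=W(m,n)$ is generated by $\mathfrak g_{-1}$, $\mathfrak g_0$ and $\mathfrak g_1$. (b) A linear map $\gamma:\mathfrak g_0\to\mathbb F$ satisfies $\gamma([X,Y])=\mathrm{str}\big(\mathrm{ad}X\circ\mathrm{ad}Y|_{\mathfrak g_0}\big)$ for all $X\in\mathfrak g_1$, $Y\in\mathfrak g_{-1}$ if and only if $\gamma(x_i\partial_j)=\delta_{ij}$, $\gamma(y_r\partial_j)=0$, $\gamma(x_iD_t)=0$ and $\gamma(y_rD_t)=-\delta_{rt}$ for all $i,j\in[1,m]$, $r,t\in[1,n]$. Consequently this $\gamma$ (the supertrace of $\mathfrak{gl}(m|n)$) is a semi-infinite character of $W(m,n)$, and it is the only one; its restriction to $\mathfrak h$ is $\mathcal E=\sum_{i=1}^m\epsilon_i-\sum_{j=1}^n\delta_j$.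
   Context: $\mathbb F$ algebraically closed of characteristic $0$, $m,n\ge1$. $\mathcal R=\mathbb F[x_1,\dots,x_m]\otimes\Lambda(y_1,\dots,y_n)$ ($x_i$ even, $y_s$ odd), graded by $\deg x_i=\deg y_s=1$. $\mathfrak g=W(m,n)$ is the Lie superalgebra of superderivations of $\mathcal R$, free over $\mathcal R$ on even $\partial_i$ ($\partial_ix_j=\delta_{ij}$, $\partial_iy_s=0$) and odd $D_t$ ($D_ty_s=\delta_{ts}$, $D_tx_j=0$); $\mathfrak g=\bigoplus_{i\ge-1}\mathfrak g_i$ with $\mathfrak g_i$ spanned by $f\partial_j,fD_t$, $f$ homogeneous of degree $i+1$, so $\mathfrak g_0=\mathrm{span}\{x_i\partial_j,y_r\partial_j,x_iD_t,y_rD_t\}\cong\mathfrak{gl}(m|n)$. $\mathrm{str}$ denotes the supertrace of an even linear endomorphism of the superspace $\mathfrak g_0$. For a $\mathbb Z$-graded Lie superalgebra $\mathbf g=\bigoplus_i\mathbf g_i$ with finite-dimensional pieces, a character $\gamma:\mathbf g_0\to\mathbb F$ is semi-infinite if (SI-1) $\mathbf g$ is generated by $\mathbf g_1,\mathbf g_0,\mathbf g_{-1}$ and (SI-2) $\gamma([X,Y])=\mathrm{str}(\mathrm{ad}X\circ\mathrm{ad}Y|_{\mathbf g_0})$ for all $X\in\mathbf g_1$, $Y\in\mathbf g_{-1}$. $\epsilon_i,\delta_s$ are the functionals on $\mathfrak h=\mathrm{span}\{x_i\partial_i,y_sD_s\}$ dual to this basis. *)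

From HB Require Import structures.
From mathcomp Require Import all_boot all_order all_algebra.
From mathcomp Require Import mpoly.

Set Implicit Arguments.
Unset Strict Implicit.
Unset Printing Implicit Defensive.

Import Order.TTheory GRing.Theory Num.Theory.
Local Open Scope ring_scope.

(* R = F[x_1..x_m] (x) Lambda(y_1..y_n) is represented by the coefficient
   function  u : {set 'I_n} -> {mpoly F[m]},  u = sum_S (u S) * y^S
   where y^S = y_{s_1} ... y_{s_k} with s_1 < ... < s_k.

   g = W(m,n) is free over R on d_j (j : 'I_m, even) and D_t (t : 'I_n, odd);
   an element X is represented by its coefficients  X : {ffun 'I_m + 'I_n -> R},
   X = sum_j X (inl j) d_j + sum_t X (inr t) D_t. *)

Section W.
Variables (F : fieldType) (m n : nat).

Definition RR := {ffun {set 'I_n} -> {mpoly F[m]}}.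
Definition GG := {ffun 'I_m + 'I_n -> RR}.

(* number of inversions between S and T: y^S y^T = (-1)^(inv S T) y^(S u T) *)
Definition inv (S T : {set 'I_n}) : nat :=
  #|[set p : 'I_n * 'I_n | [&& p.1 \in S, p.2 \in T & (p.2 < p.1)%N]]|.

Definition mulR (u v : RR) : RR :=
  [ffun U : {set 'I_n} =>
    \sum_(S : {set 'I_n}) \sum_(T : {set 'I_n} | (S :&: T == set0) && (S :|: T == U))
       ((-1) ^+ inv S T) *: (u S * v T)].

Definition dx (j : 'I_m) (u : RR) : RR := [ffun S => mderiv j (u S)].

(* the odd (left) derivation D_t of R: D_t y^(S u {t}) = (-1)^#{s in S, s < t} y^S *)
Definition dy (t : 'I_n) (u : RR) : RR :=
  [ffun S : {set 'I_n} =>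
     if t \in S then 0 else ((-1) ^+ #|[set s in S | (s < t)%N]|) *: u (t |: S)].

Definition dR (a : 'I_m + 'I_n) : RR -> RR :=
  match a with inl j => dx j | inr t => dy t end.

Definition isodd (a : 'I_m + 'I_n) : nat := if a is inr _ then 1 else 0.

Definition act (X : GG) (u : RR) : RR := \sum_(a : 'I_m + 'I_n) mulR (X a) (dR a u).

(* parity-p component of X (the parity of u y^S d_a is #|S| + isodd a) *)
Definition parG (p : bool) (X : GG) : GG :=
  [ffun a => [ffun S : {set 'I_n} =>
     if odd (#|S| + isodd a) == p then X a S else 0]].

Definition brh (p q : bool) (X Y : GG) : GG :=
  [ffun c => act X (Y c) - ((-1) ^+ (p && q)) *: act Y (X c)].

Definition br (X Y : GG) : GG :=
  \sum_(p : bool) \sum_(q : bool) brh p q (parG p X) (parG q Y).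

Definition homR (d : nat) (u : RR) : Prop :=
  forall S : {set 'I_n},
    if (#|S| <= d)%N then u S \is (d - #|S|)%N.-homog else u S == 0.

(* gpiece d X  <->  X is in g_(d-1), i.e. all coefficients homogeneous of
   degree d.  So g_{-1} = gpiece 0, g_0 = gpiece 1, g_1 = gpiece 2. *)
Definition gpiece (d : nat) (X : GG) : Prop := forall a, homR d (X a).

Inductive gen : GG -> Prop :=
| gen_piece d X : (d <= 2)%N -> gpiece d X -> gen X
| gen_add X Y : gen X -> gen Y -> gen (X + Y)
| gen_scale (c : F) X : gen X -> gen (c *: X)
| gen_br X Y : gen X -> gen Y -> gen (br X Y).

Definition varR (z : 'I_m + 'I_n) : RR :=
  match z with
  | inl i => [ffun S : {set 'I_n} => if S == set0 then 'X_i else 0]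
  | inr r => [ffun S : {set 'I_n} => if S == [set r] then 1 else 0]
  end.

(* basis of g_0:  eb z a = z * d_a, e.g. eb (inl i) (inl j) = x_i d_j,
   eb (inr r) (inr t) = y_r D_t *)
Definition eb (z a : 'I_m + 'I_n) : GG := [ffun c => if c == a then varR z else 0].

Definition coord (z a : 'I_m + 'I_n) (v : GG) : F :=
  match z with
  | inl i => (v a set0)@_(mnm1 i)
  | inr r => (v a [set r])@_(0%MM)
  end.

(* supertrace of an (even) endomorphism A of g_0, computed in the homogeneous
   basis eb z a (of parity isodd z + isodd a) *)
Definition str0 (A : GG -> GG) : F :=
  \sum_(z : 'I_m + 'I_n) \sum_(a : 'I_m + 'I_n)
     (-1) ^+ (isodd z + isodd a) * coord z a (A (eb z a)).

Definition linear_g0 (gamma : GG -> F) : Prop :=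
  forall (c : F) (u v : GG), gpiece 1 u -> gpiece 1 v ->
    gamma (c *: u + v) = c * gamma u + gamma v.

Definition character (gamma : GG -> F) : Prop :=
  linear_g0 gamma /\
  forall u v : GG, gpiece 1 u -> gpiece 1 v -> gamma (br u v) = 0.

Definition SI2 (gamma : GG -> F) : Prop :=
  forall X Y : GG, gpiece 2 X -> gpiece 0 Y ->
    gamma (br X Y) = str0 (fun v => br X (br Y v)).

Definition semi_infinite (gamma : GG -> F) : Prop :=
  character gamma /\ (forall X : GG, gen X) /\ SI2 gamma.

End W.

(* (a) By linearity it suffices to generate the monomial fields x^al y^S d_a,
   by induction on the degree of their coefficient.  In characteristic 0 a
   field of degree at least 3 is a nonzero multiple of the bracket of a
   degree-2 field x^al1 y^S1 d_i0 with x^al1 y^S1 killed by d_a and a field of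
   lower degree, as soon as such a factor x^al1 y^S1 splits off the
   coefficient.  The fields where no such factor exists, x_i^k d_i,
   x_i^k x_j d_i and x_i^k y_s d_i, are reached by brackets with x^al0 d_i
   and x_i^2 D_t.
   (b) Let [supertr] read off the supertrace of the g_0-component of a field.
   Since ad d_a lowers coefficients by d_a, the supertrace of ad X ad d_a on
   g_0 collapses to a single term, which is supertr [X, d_a]; as g_{-1} is
   spanned by the d_a, [supertr] satisfies (SI-2), and it kills [g_0, g_0].
   Conversely every basis vector z d_a of g_0 is a nonzero multiple of
   [x_i0 z d_a, d_i0], so (SI-2) forces gamma = supertr on g_0. *)

From Pilot Require Import Defs.
From HB Require Import structures.
From mathcomp Require Import all_boot all_order all_algebra.
From mathcomp Require Import mpoly.
From mathcomp Require Import zify ring.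
Import GRing.Theory.
Local Open Scope ring_scope.

Lemma linear_map0 {F : fieldType} {V W : lmodType F} (f : V -> W) :
  (forall c x y, f (c *: x + y) = c *: f x + f y) -> f 0 = 0.
Proof.
move=> f_lin; have := f_lin 1 0 0; rewrite !scale1r !addr0.
by move/(congr1 (fun z => z - f 0)); rewrite subrr addrK => <-.
Qed.

Section Multinomials.
Context {k : nat}.
Implicit Types (al be : 'X_{1..k}).

Lemma mdeg_gt0 al : (0 < mdeg al)%N -> exists j, (0 < al j)%N.
Proof.
move=> h; case: (pickP (fun j => 0 < al j)%N) => [j hj|h0]; first by exists j.
by move: h; rewrite mdegE big1 // => j _; move: (h0 j); rewrite lt0n => /negbFE/eqP.
Qed.

Lemma lepm1 al j : (0 < al j)%N -> (U_(j) <= al)%MM.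
Proof. by move=> h; apply/mnm_lepP => x; rewrite mnm1E; case: eqP => [<-|]. Qed.

Lemma mdegB_lepm al be : (be <= al)%MM -> mdeg (al - be) = (mdeg al - mdeg be)%N.
Proof. by move=> h; rewrite -{2}(submK h) mdegD addnK. Qed.

Lemma addKm al be : (al + be - al = be)%MM.
Proof. by rewrite addmC addmK. Qed.

Lemma addm_subK al be : (be <= al)%MM -> (be + (al - be))%MM = al.
Proof. by move=> h; rewrite addmC submK. Qed.

Lemma mdeg_ge2 al : (1 < mdeg al)%N -> exists j l, (U_(j) + U_(l) <= al)%MM.
Proof.
move=> h; have [j hj] : exists j, (0 < al j)%N by apply: mdeg_gt0; lia.
have [l hl] : exists l, (0 < (al - U_(j))%MM l)%N.
  by apply: mdeg_gt0; rewrite mdegB_lepm ?lepm1 // mdeg1; lia.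
exists j, l; apply/mnm_lepP => x; move: hl; rewrite mnmBE mnmDE !mnm1E.
case: (eqVneq j l) => [ejl|njl]; subst; rewrite ?eqxx /=.
  by case: (eqVneq l x) => [elx|nlx] /=; subst; lia.
case: (eqVneq j x) => [ejx|njx]; case: (eqVneq l x) => [elx|nlx] /=; subst; try lia.
by rewrite eqxx in njl.
Qed.

Definition mnm_erase i al : 'X_{1..k} := [multinom if j == i then 0%N else al j | j < k].

Lemma mnm_eraseE i al j : mnm_erase i al j = if j == i then 0%N else al j.
Proof. by rewrite mnmE. Qed.

Lemma mdeg_erase i al : mdeg al = (al i + mdeg (mnm_erase i al))%N.
Proof.
rewrite !mdegE (bigD1 i) //= [in RHS](bigD1 i) //= mnm_eraseE eqxx add0n; congr addn.
by apply: eq_bigr => j /negbTE h; rewrite mnm_eraseE h.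
Qed.

Lemma lepm_erase i al : (mnm_erase i al <= al)%MM.
Proof. by apply/mnm_lepP => j; rewrite mnm_eraseE; case: ifP. Qed.

End Multinomials.

Section Witt.
Context {F : fieldType} {m n : nat}.
Local Notation RR := (RR F m n).
Local Notation GG := (GG F m n).
Local Notation I := ('I_m + 'I_n)%type.
Implicit Types (al be : 'X_{1..m}) (S T U : {set 'I_n}) (u v w : RR) (X Y : GG).
Implicit Types (a b e z : I).

Definition sgn (k : nat) : F := (-1) ^+ k.

(* [monoR al S] is x^al y^S, [fieldR u a] is the vector field u d_a. *)
Definition monoR al S : RR := [ffun U => if U == S then 'X_[al] else 0].
Definition fieldR u a : GG := [ffun c => if c == a then u else 0].
Definition monoG al S a : GG := fieldR (monoR al S) a.

Lemma mulR_linearl c u v w : mulR (c *: u + v) w = c *: mulR u w + mulR v w.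
Proof.
apply/ffunP=> U; rewrite !ffunE scaler_sumr -big_split /=; apply: eq_bigr => S _.
rewrite scaler_sumr -big_split /=; apply: eq_bigr => T _.
by rewrite !ffunE mulrDl scalerDr -scalerAl !scalerA mulrC.
Qed.

Lemma mulR_linearr c u v w : mulR w (c *: u + v) = c *: mulR w u + mulR w v.
Proof.
apply/ffunP=> U; rewrite !ffunE scaler_sumr -big_split /=; apply: eq_bigr => S _.
rewrite scaler_sumr -big_split /=; apply: eq_bigr => T _.
by rewrite !ffunE mulrDr scalerDr -scalerAr !scalerA mulrC.
Qed.

Lemma mulR0l u : mulR 0 u = 0.
Proof.
by apply: (@linear_map0 F _ _ (fun v : RR => mulR v u)) => c x y; exact: mulR_linearl.
Qed.

Lemma mulR0r u : mulR u 0 = 0.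
Proof.
by apply: (@linear_map0 F _ _ (fun v : RR => mulR u v)) => c x y; exact: mulR_linearr.
Qed.

Lemma mulRZr c u v : mulR v (c *: u) = c *: mulR v u.
Proof. by rewrite -[c *: u]addr0 mulR_linearr mulR0r addr0. Qed.

Lemma dR_linear a c u v : dR a (c *: u + v) = c *: dR a u + dR a v.
Proof.
case: a => [j|t]; apply/ffunP=> S; rewrite !ffunE /=; first by rewrite mderivD mderivZ.
by case: ifP => _; rewrite ?scaler0 ?addr0 // scalerDr !scalerA mulrC.
Qed.

Lemma dR0 a : dR a (0 : RR) = 0.
Proof. by apply: (@linear_map0 F _ _ (dR a)) => c x y; exact: dR_linear. Qed.

Lemma act_linearl c X Y u : act (c *: X + Y) u = c *: act X u + act Y u.
Proof.
rewrite /act scaler_sumr -big_split; apply: eq_bigr => a _ /=.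
by rewrite !ffunE mulR_linearl.
Qed.

Lemma act_linearr c X u v : act X (c *: u + v) = c *: act X u + act X v.
Proof.
rewrite /act scaler_sumr -big_split; apply: eq_bigr => a _ /=.
by rewrite dR_linear mulR_linearr.
Qed.

Lemma parG_linear p c X Y : parG p (c *: X + Y) = c *: parG p X + parG p Y.
Proof.
apply/ffunP=> a; rewrite !ffunE; apply/ffunP=> S; rewrite !ffunE.
by case: ifP; rewrite ?scaler0 ?addr0.
Qed.

Lemma brh_linearl p q c X1 X2 Y :
  brh p q (c *: X1 + X2) Y = c *: brh p q X1 Y + brh p q X2 Y.
Proof.
apply/ffunP=> a; rewrite !ffunE act_linearl act_linearr; set s := (_ ^+ _).
by rewrite scalerDr scalerBr !scalerA [s * c]mulrC -!scalerA addrACA opprD.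
Qed.

Lemma brh_linearr p q c X Y1 Y2 :
  brh p q X (c *: Y1 + Y2) = c *: brh p q X Y1 + brh p q X Y2.
Proof.
apply/ffunP=> a; rewrite !ffunE act_linearl act_linearr; set s := (_ ^+ _).
by rewrite scalerDr scalerBr !scalerA [s * c]mulrC -!scalerA addrACA opprD.
Qed.

Lemma brh0l p q Y : brh p q 0 Y = 0.
Proof.
by apply: (@linear_map0 F _ _ (fun X : GG => brh p q X Y)) => c x y; exact: brh_linearl.
Qed.

Lemma brh0r p q X : brh p q X 0 = 0.
Proof.
by apply: (@linear_map0 F _ _ (fun Y : GG => brh p q X Y)) => c x y; exact: brh_linearr.
Qed.

Lemma br_linearl c X1 X2 Y : br (c *: X1 + X2) Y = c *: br X1 Y + br X2 Y.
Proof.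
rewrite /br scaler_sumr -big_split; apply: eq_bigr => p _ /=.
rewrite scaler_sumr -big_split; apply: eq_bigr => q _ /=.
by rewrite parG_linear brh_linearl.
Qed.

Lemma br_linearr c X Y1 Y2 : br X (c *: Y1 + Y2) = c *: br X Y1 + br X Y2.
Proof.
rewrite /br scaler_sumr -big_split; apply: eq_bigr => p _ /=.
rewrite scaler_sumr -big_split; apply: eq_bigr => q _ /=.
by rewrite parG_linear brh_linearr.
Qed.

Lemma br0l Y : br 0 Y = 0.
Proof.
by apply: (@linear_map0 F _ _ (fun X : GG => br X Y)) => c x y; exact: br_linearl.
Qed.

Lemma br0r X : br X 0 = 0.
Proof.
by apply: (@linear_map0 F _ _ (fun Y : GG => br X Y)) => c x y; exact: br_linearr.
Qed.

Lemma inv0S S : Defs.inv set0 S = 0%N.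
Proof. by apply/eqP; rewrite cards_eq0; apply/eqP/setP=> p; rewrite !inE. Qed.

Lemma invS0 S : Defs.inv S set0 = 0%N.
Proof. by apply/eqP; rewrite cards_eq0; apply/eqP/setP=> p; rewrite !inE andbF. Qed.

Lemma sgn_neq0 k : sgn k != 0.
Proof. by rewrite /sgn expf_neq0 // oppr_eq0 oner_eq0. Qed.

Lemma mulR_mono al S be T : mulR (monoR al S) (monoR be T) =
  if S :&: T == set0 then sgn (Defs.inv S T) *: monoR (al + be) (S :|: T) else 0.
Proof.
apply/ffunP=> U; rewrite !ffunE (bigD1 S) //= [X in _ + X]big1 ?addr0; last first.
  by move=> S' /negbTE nS; apply: big1 => T' _; rewrite !ffunE nS mul0r scaler0.
case: ifP => hST; last first.
  rewrite big1 ?ffunE // => T' /andP[h _]; rewrite !ffunE eqxx.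
  case: eqP => [eT|_]; last by rewrite mulr0 scaler0.
  by move: h; rewrite eT hST.
case: (eqVneq U (S :|: T)) => [->|nU].
  rewrite (bigD1 T) /=; last by rewrite hST eqxx.
  rewrite [X in _ + X]big1 ?addr0; last first.
    by move=> T' /andP [_ /negbTE nT]; rewrite !ffunE nT mulr0 scaler0.
  by rewrite !ffunE !eqxx mpolyXD.
rewrite big1; last first.
  move=> T' /andP[_ /eqP hU]; rewrite !ffunE eqxx.
  case: eqP => [eT|_]; last by rewrite mulr0 scaler0.
  by move: nU; rewrite -hU eT eqxx.
by rewrite !ffunE (negbTE nU) scaler0.
Qed.

Lemma mulR_mono_disj al S be T : S :&: T = set0 ->
  mulR (monoR al S) (monoR be T) = sgn (Defs.inv S T) *: monoR (al + be) (S :|: T).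
Proof. by move=> h; rewrite mulR_mono h eqxx. Qed.

Lemma mulR1l w : mulR (monoR 0 set0) w = w.
Proof.
apply/ffunP=> U; rewrite ffunE (bigD1 set0) //= [X in _ + X]big1 ?addr0; last first.
  by move=> S' /negbTE nS; apply: big1 => T _; rewrite !ffunE nS mul0r scaler0.
rewrite (bigD1 U) /=; last by rewrite set0I set0U !eqxx.
rewrite [X in _ + X]big1 ?addr0; last first.
  by move=> T /andP[/andP[_]]; rewrite set0U => /eqP ->; rewrite eqxx.
by rewrite !ffunE eqxx mpolyX0 mul1r inv0S expr0 scale1r.
Qed.

Lemma mulR1r w : mulR w (monoR 0 set0) = w.
Proof.
apply/ffunP=> U; rewrite ffunE (bigD1 U) //= [X in _ + X]big1 ?addr0; last first.
  move=> S nS; apply: big1 => T /andP[_ /eqP hU].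
  rewrite !ffunE; case: eqP => [eT|_]; last by rewrite mulr0 scaler0.
  by move: nS; rewrite -hU eT setU0 eqxx.
rewrite (bigD1 set0) /=; last by rewrite setI0 setU0 !eqxx.
rewrite [X in _ + X]big1 ?addr0; last first.
  by move=> T /andP[_ nT]; rewrite !ffunE (negbTE nT) mulr0 scaler0.
by rewrite !ffunE eqxx mpolyX0 mulr1 invS0 expr0 scale1r.
Qed.

Lemma dx_mono j al S : dx j (monoR al S) = (al j)%:R *: monoR (al - U_(j))%MM S.
Proof.
apply/ffunP=> U; rewrite !ffunE; case: eqP => _; first by rewrite mderivX.
by rewrite mderiv0 scaler0.
Qed.

Lemma dy_mono t al S : dy t (monoR al S) =
  if t \in S then sgn #|[set s in S :\ t | (s < t)%N]| *: monoR al (S :\ t) else 0.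
Proof.
apply/ffunP=> U; rewrite /monoR !ffunE.
case: (boolP (t \in S)) => tS; rewrite !ffunE; last first.
  case: ifP => // tU; case: eqP => [eS|_]; last by rewrite /= !scaler0.
  by move: tS; rewrite -eS setU11.
case: (boolP (t \in U)) => tU.
  case: eqP => [eU|_]; last by rewrite /= !scaler0.
  by move: tU; rewrite eU setD11.
case: (eqVneq U (S :\ t)) => [->|nU]; first by rewrite setD1K // eqxx.
case: eqP => [eS|_]; last by rewrite /= !scaler0.
by move: nU; rewrite -eS setU1K // eqxx.
Qed.

Lemma card_lt_set0 (t : 'I_n) : #|[set s in (set0 : {set 'I_n}) | (s < t)%N]| = 0%N.
Proof. by apply/eqP; rewrite cards_eq0; apply/eqP/setP=> x; rewrite !inE. Qed.

Lemma dy_mono1 t al : dy t (monoR al [set t]) = monoR al set0.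
Proof. by rewrite dy_mono set11 setDv card_lt_set0 /sgn expr0 scale1r. Qed.

Definition free_of a al S :=
  match a with inl j => al j == 0%N | inr t => t \notin S end.

Lemma dR_free_of al S a : free_of a al S -> dR a (monoR al S) = 0.
Proof.
by case: a => [j|t] /= h; [rewrite dx_mono (eqP h) scale0r | rewrite dy_mono (negbTE h)].
Qed.

Definition parityR (p : bool) u := forall U, odd #|U| != p -> u U = 0.

Lemma parityR_mono al S : parityR (odd #|S|) (monoR al S).
Proof. by move=> U hU; rewrite ffunE; case: eqP => // eU; move: hU; rewrite eU eqxx. Qed.

Lemma fieldR_linear c u v a : fieldR (c *: u + v) a = c *: fieldR u a + fieldR v a.
Proof. by apply/ffunP=> b; rewrite !ffunE; case: ifP; rewrite ?scaler0 ?addr0. Qed.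

Lemma fieldR0 a : fieldR 0 a = 0.
Proof. by apply/ffunP=> b; rewrite !ffunE if_same. Qed.

Lemma fieldRZ c u a : fieldR (c *: u) a = c *: fieldR u a.
Proof. by rewrite -[c *: u]addr0 fieldR_linear fieldR0 addr0. Qed.

Lemma parG_fieldR p q u a : parityR q u ->
  parG p (fieldR u a) = if q (+) odd (isodd a) == p then fieldR u a else 0.
Proof.
move=> hu; apply/ffunP=> c; apply/ffunP=> U.
have -> : (if q (+) odd (isodd a) == p then fieldR u a else 0) c U =
          if q (+) odd (isodd a) == p then fieldR u a c U else 0.
  by case: ifP; rewrite ?ffunE.
rewrite /fieldR !ffunE; case: (eqVneq c a) => [->|_] /=; last by rewrite !ffunE !if_same.
case: (eqVneq (odd #|U|) q) => hU; first by rewrite oddD hU.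
by rewrite hu // !if_same.
Qed.

Lemma act_fieldR u a v : act (fieldR u a) v = mulR u (dR a v).
Proof.
rewrite /act (bigD1 a) //= big1 ?addr0 ?ffunE ?eqxx // => b nb.
by rewrite ffunE (negbTE nb) mulR0l.
Qed.

Lemma br_fieldR pu pv u a v b : parityR pu u -> parityR pv v ->
  br (fieldR u a) (fieldR v b) = fieldR (mulR u (dR a v)) b -
   (-1) ^+ ((pu (+) odd (isodd a)) && (pv (+) odd (isodd b))) *:
     fieldR (mulR v (dR b u)) a.
Proof.
move=> hu hv; rewrite /br !big_bool /= !(parG_fieldR _ _ _ _ hu) !(parG_fieldR _ _ _ _ hv).
have brh_fieldR p q : brh p q (fieldR u a) (fieldR v b) =
    fieldR (mulR u (dR a v)) b - (-1) ^+ (p && q) *: fieldR (mulR v (dR b u)) a.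
  apply/ffunP=> c; rewrite !ffunE !act_fieldR.
  by case: eqP => _; case: eqP => _; rewrite ?dR0 ?mulR0r ?scaler0 ?subr0.
by case: (pu (+) _); case: (pv (+) _); rewrite /= ?brh0l ?brh0r ?addr0 ?add0r brh_fieldR.
Qed.

Lemma br_monoG al S a be T b : br (monoG al S a) (monoG be T b) =
  fieldR (mulR (monoR al S) (dR a (monoR be T))) b -
   (-1) ^+ ((odd #|S| (+) odd (isodd a)) && (odd #|T| (+) odd (isodd b))) *:
     fieldR (mulR (monoR be T) (dR b (monoR al S))) a.
Proof. exact: br_fieldR (parityR_mono _ _) (parityR_mono _ _). Qed.

Lemma monoGE al S a b U :
  monoG al S a b U = if (b == a) && (U == S) then 'X_[al] else 0.
Proof. by rewrite /monoG /fieldR !ffunE; case: (b == a); rewrite ?ffunE. Qed.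

Lemma scaleGE c X a : (c *: X) a = c *: X a.
Proof. by rewrite ffunE. Qed.

Lemma scaleRE c u U : (c *: u) U = c *: u U.
Proof. by rewrite ffunE. Qed.

Lemma GG_decomp X :
  X = \sum_a \sum_S \sum_(al <- msupp (X a S)) (X a S)@_al *: monoG al S a.
Proof.
apply/ffunP=> b; apply/ffunP=> U; rewrite !sum_ffunE.
rewrite (bigD1 b) //= [X in _ + X]big1 ?addr0; last first.
  move=> a nab; rewrite !sum_ffunE big1 // => S _; rewrite !sum_ffunE big1 // => al _.
  by rewrite scaleGE scaleRE monoGE eq_sym (negbTE nab) /= scaler0.
rewrite !sum_ffunE (bigD1 U) //= [X in _ + X]big1 ?addr0; last first.
  move=> S nS; rewrite !sum_ffunE big1 // => al _.
  by rewrite scaleGE scaleRE monoGE eqxx eq_sym (negbTE nS) /= scaler0.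
rewrite !sum_ffunE [LHS]mpolyE; apply: eq_bigr => al _.
by rewrite scaleGE scaleRE monoGE !eqxx.
Qed.

Lemma GG_ind (P : GG -> Prop) X : P 0 ->
  (forall c x y, P x -> P y -> P (c *: x + y)) ->
  (forall al S a, al \in msupp (X a S) -> P (monoG al S a)) -> P X.
Proof.
move=> P0 Plin Pmono; rewrite (GG_decomp X).
have PD x y : P x -> P y -> P (x + y) by move=> px py; rewrite -[x]scale1r; exact: Plin.
apply: big_ind => // a _; apply: big_ind => // S _.
rewrite big_seq; apply: big_ind => // al hal.
by rewrite -[_ *: monoG _ _ _]addr0; apply: Plin => //; exact: Pmono.
Qed.

Lemma gpiece_msupp {d X a S al} :
  gpiece d X -> al \in msupp (X a S) -> (mdeg al + #|S| = d)%N.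
Proof.
move=> h hal; have := h a S; case: leqP => hS.
  by move/dhomogP/(_ _ hal) => ->; rewrite subnK.
by move/eqP=> e; move: hal; rewrite e mcoeff_msupp mcoeff0 eqxx.
Qed.

Lemma gpiece_monoG d al S a : (mdeg al + #|S| = d)%N -> gpiece d (monoG al S a).
Proof.
move=> hd b U; rewrite monoGE; case: leqP => hU.
  case: ifP => [/andP[_ /eqP ->]|_]; last exact: dhomog0.
  by rewrite dhomogX -hd addnK.
case: ifP => // /andP[_ /eqP eU]; move: hU; rewrite eU -hd.
by rewrite ltnNge leq_addl.
Qed.

Lemma gpiece0 d : gpiece d (0 : GG).
Proof. by move=> a S; rewrite !ffunE; case: ifP => _; [exact: dhomog0|]. Qed.

Lemma gpiece_linear d c X Y : gpiece d X -> gpiece d Y -> gpiece d (c *: X + Y).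
Proof.
move=> hX hY a S; have := hX a S; have := hY a S; rewrite !ffunE.
case: ifP => _; first by move=> h1 h2; apply: dhomogD => //; exact: dhomogZ.
by move=> /eqP -> /eqP ->; rewrite scaler0 addr0.
Qed.

Lemma gpieceZ d c X : gpiece d X -> gpiece d (c *: X).
Proof. by move=> h; rewrite -[c *: X]addr0; apply: gpiece_linear => //; exact: gpiece0. Qed.

(* [coordR z u] is the coefficient of the degree-one monomial [varR z] in [u],
   so on g_0 [supertr] is the supertrace of gl(m|n). *)
Definition coordR z u : F :=
  match z with inl i => (u set0)@_(U_(i)) | inr r => (u [set r])@_(0%MM) end.
Definition cst u : F := (u set0)@_(0%MM).
Definition supertr X : F := \sum_z sgn (isodd z) * coordR z (X z).

Lemma coord_coordR z a X : Defs.coord z a X = coordR z (X a).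
Proof. by case: z. Qed.

Lemma coordR_linear z c u v : coordR z (c *: u + v) = c * coordR z u + coordR z v.
Proof. by case: z => [i|r] /=; rewrite !ffunE mcoeffD mcoeffZ. Qed.

Lemma coordR0 z : coordR z 0 = 0.
Proof. by case: z => [i|r] /=; rewrite ffunE mcoeff0. Qed.

Lemma coordRZ z c u : coordR z (c *: u) = c * coordR z u.
Proof. by rewrite -[c *: u]addr0 coordR_linear coordR0 addr0. Qed.

Lemma coordR_fieldR z b u e : coordR z (fieldR u e b) = (b == e)%:R * coordR z u.
Proof. by rewrite ffunE; case: eqP => _; rewrite ?mul1r ?mul0r ?coordR0. Qed.

Lemma coordR_cst z u : coordR z u = cst (dR z u).
Proof.
case: z => [i|r] /=; rewrite /cst ffunE; first by rewrite mcoeff_deriv add0m mnm0E mulr1n.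
by rewrite in_set0 card_lt_set0 /sgn expr0 scale1r setU0.
Qed.

Lemma cstZ c u : cst (c *: u) = c * cst u.
Proof. by rewrite /cst ffunE mcoeffZ. Qed.

Lemma cst_odd u : parityR true u -> cst u = 0.
Proof. by move=> h; rewrite /cst h ?cards0 // mcoeff0. Qed.

Lemma supertr_linear c X Y : supertr (c *: X + Y) = c * supertr X + supertr Y.
Proof.
rewrite /supertr mulr_sumr -big_split; apply: eq_bigr => z _ /=.
by rewrite !ffunE coordR_linear mulrDr mulrCA.
Qed.

Lemma supertr0 : supertr 0 = 0.
Proof. by rewrite /supertr big1 // => z _; rewrite ffunE coordR0 mulr0. Qed.

Lemma supertrZ c X : supertr (c *: X) = c * supertr X.
Proof. by rewrite -[c *: X]addr0 supertr_linear supertr0 addr0. Qed.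

Lemma supertr_fieldR u e : supertr (fieldR u e) = sgn (isodd e) * coordR e u.
Proof.
rewrite /supertr (bigD1 e) //= big1 ?addr0 ?ffunE ?eqxx // => z nz.
by rewrite ffunE (negbTE nz) coordR0 mulr0.
Qed.

Lemma str0_linear (A A1 A2 : GG -> GG) c : (forall x, A x = c *: A1 x + A2 x) ->
  str0 A = c * str0 A1 + str0 A2.
Proof.
move=> h; rewrite /str0 mulr_sumr -big_split; apply: eq_bigr => z _ /=.
rewrite mulr_sumr -big_split; apply: eq_bigr => a _ /=.
by rewrite h !coord_coordR !ffunE coordR_linear mulrDr mulrCA.
Qed.

Lemma str0_eq0 (A : GG -> GG) : (forall x, A x = 0) -> str0 A = 0.
Proof.
move=> h; rewrite /str0 big1 // => z _; rewrite big1 // => a _.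
by rewrite h coord_coordR ffunE coordR0 mulr0.
Qed.

Definition var_mnm z : 'X_{1..m} := if z is inl i then U_(i) else 0%MM.
Definition var_set z : {set 'I_n} := if z is inr r then [set r] else set0.

Lemma varR_monoR z : varR F z = monoR (var_mnm z) (var_set z).
Proof. by case: z => [i|r]; apply/ffunP=> U; rewrite !ffunE //= mpolyX0. Qed.

Lemma parityR_var z : parityR (odd #|var_set z|) (varR F z).
Proof. by rewrite varR_monoR; exact: parityR_mono. Qed.

Lemma ebE z a : eb F z a = fieldR (varR F z) a.
Proof. by []. Qed.

Lemma dR_monoR0 e : dR e (monoR 0 set0) = 0.
Proof. by apply: dR_free_of; case: e => [j|t] /=; rewrite ?mnm0E ?in_set0. Qed.

Lemma mnm1_eq (i j : 'I_m) : (U_(i) == U_(j))%MM = (i == j).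
Proof.
apply/eqP/eqP => [/mnmP/(_ j)|->//]; rewrite !mnm1E eqxx.
by case: (eqVneq i j).
Qed.

Lemma dR_var a z : dR a (varR F z) = (a == z)%:R *: monoR 0 set0.
Proof.
rewrite varR_monoR; case: a => [j|t]; case: z => [i|r] /=.
- rewrite dx_mono mnm1E (inj_eq inl_inj) eq_sym.
  by case: eqP => [->|_]; rewrite ?scale0r // -[X in (X - _)%MM]addm0 addKm.
- by rewrite dx_mono mnm0E !scale0r.
- by rewrite dy_mono in_set0 scale0r.
- rewrite (inj_eq inr_inj); case: eqVneq => [->|nrt]; first by rewrite dy_mono1 scale1r.
  by rewrite dy_mono inE (negbTE nrt) scale0r.
Qed.

Lemma coordR_var e z : coordR e (varR F z) = (e == z)%:R.
Proof.
have set1_eq0 (r : 'I_n) : ([set r] == set0) = false by rewrite -cards_eq0 cards1.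
rewrite varR_monoR; case: e => [j|t]; case: z => [i|r] /=; rewrite ffunE.
- by rewrite eqxx mcoeffX mnm1_eq (inj_eq inl_inj) eq_sym.
- by rewrite eq_sym set1_eq0 mcoeff0.
- by rewrite set1_eq0 mcoeff0.
- rewrite (inj_eq set1_inj) (inj_eq inr_inj) eq_sym.
  by case: eqP => _; rewrite ?mcoeffX ?eqxx ?mcoeff0.
Qed.

Lemma supertr_eb z a : supertr (eb F z a) = sgn (isodd a) * (a == z)%:R.
Proof. by rewrite ebE supertr_fieldR coordR_var. Qed.

Lemma parityR_dR p u a : parityR p u -> parityR (p (+) odd (isodd a)) (dR a u).
Proof.
move=> hu U; case: a => [j|t] /= hU; rewrite ffunE.
  by rewrite addbF in hU; rewrite hu // mderiv0.
case: ifP => // tU; rewrite hu ?scaler0 //.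
by rewrite cardsU1 tU /=; move: hU; case: (odd _); case: (p).
Qed.

Lemma card_ltU1 (t r : 'I_n) U : t \notin U ->
  #|[set s in t |: U | (s < r)%N]| = ((t < r)%N + #|[set s in U | (s < r)%N]|)%N.
Proof.
move=> tU; rewrite (cardsD1 t) inE setU11 /=; congr addn; apply: eq_card => x.
by rewrite !inE; case: eqP => [->|] /=; first by rewrite (negbTE tU).
Qed.

Lemma dR_comm a e u : dR a (dR e u) = sgn (isodd a * isodd e) *: dR e (dR a u).
Proof.
case: a => [j|t]; case: e => [i|r] /=; rewrite /sgn ?expr0 ?scale1r;
  apply/ffunP=> U; rewrite !ffunE.
- by rewrite mderiv_comm.
- by case: ifP => _; rewrite ?mderiv0 // mderivZ.
- by case: ifP => _; rewrite ?mderiv0 // mderivZ.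
case: (eqVneq t r) => [<-|ntr]; first by rewrite !setU11 /= !scaler0 !if_same scaler0.
case: (boolP (t \in U)) => tU.
  by rewrite /= in_setU1 tU orbT /= !scaler0 if_same scaler0.
case: (boolP (r \in U)) => rU; first by rewrite /= in_setU1 rU orbT /= !scaler0.
rewrite /= !in_setU1 (negbTE tU) (negbTE rU) ?orbF (negbTE ntr) eq_sym (negbTE ntr).
rewrite !card_ltU1 // setUCA !scalerA; congr (_ *: _).
rewrite !exprD; case: ltngtP ntr => h ntr //=; try ring.
by rewrite (ord_inj h) eqxx in ntr.
Qed.

Lemma br_fieldR_const p u e b : parityR p u ->
  br (fieldR u e) (fieldR (monoR 0 set0) b) =
  - (-1) ^+ ((p (+) odd (isodd e)) && odd (isodd b)) *: fieldR (dR b u) e.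
Proof.
move=> hu; rewrite (br_fieldR _ _ _ _ _ _ hu (parityR_mono _ _)) dR_monoR0 mulR0r fieldR0.
by rewrite sub0r mulR1l cards0 scaleNr.
Qed.

Lemma br_const_eb a z b :
  br (fieldR (monoR 0 set0) a) (eb F z b) = (a == z)%:R *: fieldR (monoR 0 set0) b.
Proof.
rewrite ebE (br_fieldR _ _ _ _ _ _ (parityR_mono _ _) (parityR_var _)) dR_monoR0 mulR0r.
by rewrite fieldR0 scaler0 subr0 dR_var mulR1l fieldRZ.
Qed.

(* ad d_a sends z d_b to (a == z) d_b, so the supertrace of ad(u d_e) ad(d_a)
   reduces to the single basis vector a d_e, where it is read off d_a d_e u. *)
Lemma supertr_br_const p u e a : parityR p u ->
  supertr (br (fieldR u e) (fieldR (monoR 0 set0) a)) =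
  str0 (fun x => br (fieldR u e) (br (fieldR (monoR 0 set0) a) x)).
Proof.
move=> hu; rewrite (br_fieldR_const _ _ _ _ hu) supertrZ supertr_fieldR /str0.
rewrite (bigD1 a) //= [X in _ + X]big1 ?addr0; last first.
  move=> z nz; apply: big1 => b _.
  by rewrite br_const_eb eq_sym (negbTE nz) scale0r br0r coord_coordR ffunE coordR0 mulr0.
have brE b : br (fieldR u e) (br (fieldR (monoR 0 set0) a) (eb F a b)) =
    - (-1) ^+ ((p (+) odd (isodd e)) && odd (isodd b)) *: fieldR (dR b u) e.
  by rewrite br_const_eb eqxx scale1r (br_fieldR_const _ _ _ _ hu).
rewrite (bigD1 e) //= [X in _ + X]big1 ?addr0; last first.
  move=> b nb.
  by rewrite brE coord_coordR scaleGE coordRZ coordR_fieldR (negbTE nb) mul0r !mulr0.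
rewrite brE coord_coordR scaleGE coordRZ coordR_fieldR eqxx mul1r.
rewrite !coordR_cst dR_comm cstZ.
case: (boolP ((p (+) odd (isodd e)) (+) odd (isodd a))) => hp.
  by rewrite cst_odd ?mulr0 // -hp; apply: parityR_dR; apply: parityR_dR.
rewrite /sgn {brE}; case: a hp => [j|t]; case: e => [i|r]; case: (p) => //= _; ring.
Qed.

Lemma supertr_br X Y : gpiece 0 Y -> supertr (br X Y) = str0 (fun x => br X (br Y x)).
Proof.
move=> hY.
apply: (GG_ind (fun X => supertr (br X Y) = str0 (fun x => br X (br Y x)))).
- by rewrite br0l supertr0; symmetry; apply: str0_eq0 => x; exact: br0l.
- move=> c x y hx hy; rewrite br_linearl supertr_linear hx hy; symmetry.
  by apply: str0_linear => v; exact: br_linearl.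
move=> al S e _.
apply: (GG_ind (fun Y => supertr (br (monoG al S e) Y) =
                         str0 (fun x => br (monoG al S e) (br Y x)))).
- by rewrite br0r supertr0; symmetry; apply: str0_eq0 => x; rewrite br0l br0r.
- move=> c x y hx hy; rewrite br_linearr supertr_linear hx hy; symmetry.
  by apply: str0_linear => v; rewrite br_linearl br_linearr.
move=> be T a hbe.
move/eqP: (gpiece_msupp hY hbe); rewrite addn_eq0 mdeg_eq0 cards_eq0.
case/andP => /eqP -> /eqP ->.
exact: supertr_br_const (parityR_mono al S).
Qed.

Lemma monoR_deg1 {al S} : (mdeg al + #|S| = 1)%N -> exists z, monoR al S = varR F z.
Proof.
case: (posnP #|S|) => hS.
  rewrite hS addn0 => /eqP /mdeg1P [i /eqP ->]; exists (inl i).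
  by rewrite varR_monoR; move/eqP: hS; rewrite cards_eq0 => /eqP ->.
move=> h; have /cards1P [r ->] : #|S| == 1%N by rewrite eqn_leq hS; lia.
have /eqP : mdeg al = 0%N by lia.
by rewrite mdeg_eq0 => /eqP ->; exists (inr r); rewrite varR_monoR.
Qed.

Lemma supertr_br_eb z a e b : supertr (br (eb F z a) (eb F e b)) = 0.
Proof.
rewrite !ebE (br_fieldR _ _ _ _ _ _ (parityR_var _) (parityR_var _)) !dR_var !mulRZr !mulR1r.
rewrite !fieldRZ -scaleNr supertr_linear !supertrZ !supertr_fieldR !coordR_var.
case: (eqVneq a e) => [->|naw]; case: (eqVneq b z) => [->|nbz]; rewrite ?eqxx /=; try ring.
by rewrite /sgn; case: e => [i|r]; case: z => [j|t]; rewrite /= ?cards0 ?cards1 /=; ring.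
Qed.

Lemma supertr_br_g0 X Y : gpiece 1 X -> gpiece 1 Y -> supertr (br X Y) = 0.
Proof.
move=> hX hY; apply: (GG_ind (fun X => supertr (br X Y) = 0) X).
- by rewrite br0l supertr0.
- by move=> c x y hx hy; rewrite br_linearl supertr_linear hx hy mulr0 addr0.
move=> al S a hal; have [z hz] := monoR_deg1 (gpiece_msupp hX hal).
apply: (GG_ind (fun Y => supertr (br (monoG al S a) Y) = 0) Y).
- by rewrite br0r supertr0.
- by move=> c x y hx hy; rewrite br_linearr supertr_linear hx hy mulr0 addr0.
move=> be T b hbe; have [e he] := monoR_deg1 (gpiece_msupp hY hbe).
by rewrite /monoG hz he -!ebE supertr_br_eb.
Qed.

Lemma linear_g0_0 (gamma : GG -> F) : linear_g0 gamma -> gamma 0 = 0.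
Proof.
move=> h; have := h 1 0 0 (gpiece0 _) (gpiece0 _).
rewrite scale1r addr0 mul1r => /(congr1 (fun x => x - gamma 0)).
by rewrite subrr addrK => <-.
Qed.

Lemma linear_g0_eq_supertr (gamma : GG -> F) : linear_g0 gamma ->
  (forall z a, gamma (eb F z a) = supertr (eb F z a)) ->
  forall X, gpiece 1 X -> gamma X = supertr X.
Proof.
move=> hl he X hX; suff [] : gpiece 1 X /\ gamma X = supertr X by [].
apply: (GG_ind (fun X => gpiece 1 X /\ gamma X = supertr X) X).
- by split; [exact: gpiece0 | rewrite linear_g0_0 // supertr0].
- move=> c x y [hx ex] [hy ey]; split; first exact: gpiece_linear.
  by rewrite hl // supertr_linear ex ey.
move=> al S a hal; have hd := gpiece_msupp hX hal.
have [z hz] := monoR_deg1 hd.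
by split; [exact: gpiece_monoG | rewrite /monoG hz -ebE he].
Qed.

Lemma gpiece_dR_monoR al S a e :
  (mdeg al + #|S| = 2)%N -> gpiece 1 (fieldR (dR a (monoR al S)) e).
Proof.
move=> h; case: a => [j|t] /=.
  rewrite dx_mono fieldRZ; case: (posnP (al j)) => hj.
    by rewrite hj scale0r; exact: gpiece0.
  apply: gpieceZ; apply: gpiece_monoG; rewrite mdegB_lepm ?lepm1 // mdeg1.
  have : (al j <= mdeg al)%N by rewrite mdegE (bigD1 j) //= leq_addr.
  lia.
rewrite dy_mono; case: ifP => tS; last by rewrite fieldR0; exact: gpiece0.
have hc : #|S| = #|S :\ t|.+1 by rewrite (cardsD1 t S) tS.
by rewrite fieldRZ; apply: gpieceZ; apply: gpiece_monoG; rewrite hc in h; lia.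
Qed.

Lemma gpiece_br_2_0 X Y : gpiece 2 X -> gpiece 0 Y -> gpiece 1 (br X Y).
Proof.
move=> hX hY; apply: (GG_ind (fun X => gpiece 1 (br X Y)) X).
- by rewrite br0l; exact: gpiece0.
- by move=> c x y hx hy; rewrite br_linearl; exact: gpiece_linear.
move=> al S e hal; have hd := gpiece_msupp hX hal.
apply: (GG_ind (fun Y => gpiece 1 (br (monoG al S e) Y)) Y).
- by rewrite br0r; exact: gpiece0.
- by move=> c x y hx hy; rewrite br_linearr; exact: gpiece_linear.
move=> be T a hbe.
move/eqP: (gpiece_msupp hY hbe); rewrite addn_eq0 mdeg_eq0 cards_eq0.
case/andP => /eqP -> /eqP ->.
rewrite /monoG (br_fieldR_const _ _ _ _ (parityR_mono _ _)).
by apply: gpieceZ; apply: gpiece_dR_monoR.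
Qed.

Lemma SI2_of_supertr_eb (gamma : GG -> F) : linear_g0 gamma ->
  (forall z a, gamma (eb F z a) = supertr (eb F z a)) -> SI2 gamma.
Proof.
move=> hl he X Y hX hY; rewrite (linear_g0_eq_supertr _ hl he); last exact: gpiece_br_2_0.
exact: supertr_br.
Qed.

Definition supertr_values (gamma : GG -> F) : Prop :=
  (forall i j : 'I_m, gamma (eb F (inl i) (inl j)) = (i == j)%:R) /\
  (forall (r : 'I_n) (j : 'I_m), gamma (eb F (inr r) (inl j)) = 0) /\
  (forall (i : 'I_m) (t : 'I_n), gamma (eb F (inl i) (inr t)) = 0) /\
  (forall r t : 'I_n, gamma (eb F (inr r) (inr t)) = - (r == t)%:R).

Lemma supertr_valuesE (gamma : GG -> F) : supertr_values gamma <->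
  (forall z a, gamma (eb F z a) = supertr (eb F z a)).
Proof.
split=> [[h1 [h2 [h3 h4]]] z a|h].
  rewrite supertr_eb /sgn; case: z => [i|r]; case: a => [j|t] /=.
  - by rewrite h1 (inj_eq inl_inj) eq_sym expr0 mul1r.
  - by rewrite h3 mulr0.
  - by rewrite h2 mulr0.
  - by rewrite h4 (inj_eq inr_inj) eq_sym expr1 mulN1r.
split; [|split; [|split]] => ? ?; rewrite h supertr_eb /sgn /=.
- by rewrite (inj_eq inl_inj) eq_sym expr0 mul1r.
- by rewrite mulr0.
- by rewrite mulr0.
- by rewrite (inj_eq inr_inj) eq_sym expr1 mulN1r.
Qed.

Lemma gen_linear c X Y : gen X -> gen Y -> gen (c *: X + Y).
Proof. by move=> hX hY; apply: gen_add => //; apply: gen_scale. Qed.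

Lemma gen_scale_inv (c : F) X : c != 0 -> gen (c *: X) -> gen X.
Proof. by move=> hc h; rewrite -[X]scale1r -(mulVf hc) -scalerA; apply: gen_scale. Qed.

Lemma gen_monoG_small al S a : (mdeg al + #|S| <= 2)%N -> gen (monoG al S a).
Proof. by move=> h; apply: (gen_piece (d := (mdeg al + #|S|)%N)) => //; exact: gpiece_monoG. Qed.

Section CharZero.
Hypotheses (charF : [pchar F] =i pred0) (hm : (0 < m)%N).
Let i0 : 'I_m := Ordinal hm.

Lemma natF_neq0 k : (0 < k)%N -> (k%:R : F) != 0.
Proof. by move/pcharf0P: charF => h; rewrite h -lt0n. Qed.

(* (SI-2) at X = x_i0 z d_a, Y = d_i0 pins gamma on z d_a, a nonzero multiple
   of [X, Y]. *)
Lemma SI2_supertr_eb (gamma : GG -> F) : linear_g0 gamma -> SI2 gamma ->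
  forall z a, gamma (eb F z a) = supertr (eb F z a).
Proof.
move=> hl hs z a; set k : F := - ((U_(i0) + var_mnm z)%MM i0)%:R.
have k_neq0 : k != 0 by rewrite oppr_eq0 natF_neq0 // mnmDE mnm1E eqxx.
have brE : br (monoG (U_(i0) + var_mnm z) (var_set z) a) (monoG 0 set0 (inl i0)) =
           k *: eb F z a.
  rewrite /monoG (br_fieldR_const _ _ _ _ (parityR_mono _ _)) /= andbF expr0.
  by rewrite dx_mono addKm -varR_monoR fieldRZ scalerA mulN1r.
have gX : gpiece 2 (monoG (U_(i0) + var_mnm z) (var_set z) a).
  by apply: gpiece_monoG; case: z {k k_neq0 brE} => [i|r] /=;
    rewrite mdegD !mdeg1 ?mdeg0 ?cards0 ?cards1.
have gY : gpiece 0 (monoG 0 set0 (inl i0)) by apply: gpiece_monoG; rewrite mdeg0 cards0.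
have g1 : gpiece 1 (eb F z a).
  by rewrite ebE varR_monoR; apply: gpiece_monoG; case: z {k k_neq0 brE gX} => [i|r] /=;
    rewrite ?mdeg1 ?mdeg0 ?cards0 ?cards1.
have := hs _ _ gX gY; rewrite -supertr_br // brE supertrZ.
have := hl k (eb F z a) 0 g1 (gpiece0 1); rewrite !addr0 (linear_g0_0 _ hl) addr0 => ->.
exact: mulfI.
Qed.

Section Generation.
Hypothesis (hn : (0 < n)%N).
Let t0 : 'I_n := Ordinal hn.

(* [x_i x^be y^S d_i, x^al0 d_i] = (al0 i - 1) x^(al0 + be) y^S d_i *)
Lemma gen_monoG_inl_shift i be S al0 : be i = 0%N -> (2 <= al0 i)%N ->
  gen (monoG (U_(i) + be) S (inl i)) -> gen (monoG al0 set0 (inl i)) ->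
  gen (monoG (al0 + be) S (inl i)).
Proof.
move=> hb h0 gX gY; have := gen_br gX gY.
have mnmE : (U_(i) + be + (al0 - U_(i)) = al0 + be)%MM.
  by apply/mnmP => j; rewrite !mnmDE mnmBE mnm1E; case: eqP => [<-|_] /=; lia.
rewrite br_monoG /= !dx_mono !mulRZr !mulR_mono_disj ?setI0 ?set0I //.
rewrite invS0 inv0S setU0 set0U cards0 andbF expr0 scale1r /sgn expr0 !scale1r.
rewrite addKm mnmE !fieldRZ mnmDE mnm1E eqxx hb addn0.
rewrite -scalerBl -(natrB _ (ltnW h0)) => h.
by apply: gen_scale_inv h; apply: natF_neq0; lia.
Qed.

(* [x_i^2 D_t, x^al0 y_t d_i] = x^(al0 + 2 U_i) d_i + 2 x^(al0 + U_i) y_t D_t *)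
Lemma gen_monoG_inl_pure i al0 : (1 <= al0 i)%N ->
  gen (monoG al0 [set t0] (inl i)) -> gen (monoG (al0 + U_(i)) [set t0] (inr t0)) ->
  gen (monoG (U_(i) + U_(i) + al0) set0 (inl i)).
Proof.
move=> h0 gY gZ.
have gX : gen (monoG (U_(i) + U_(i)) set0 (inr t0)).
  by apply: gen_monoG_small; rewrite mdegD mdeg1 cards0.
have := gen_br gX gY.
rewrite br_monoG /= dx_mono dy_mono1 !mulRZr !mulR_mono_disj ?setI0 ?set0I //.
rewrite !invS0 !setU0 cards0 cards1 /sgn /= !expr0 !scale1r expr1 addKm.
rewrite mnmDE mnm1E eqxx fieldRZ scaleN1r opprK => h.
set Z := monoG (al0 + U_(i)) [set t0] (inr t0).
have -> : monoG (U_(i) + U_(i) + al0) set0 (inl i) =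
          (- 2%:R) *: Z + (monoG (U_(i) + U_(i) + al0) set0 (inl i) + 2%:R *: Z).
  by rewrite scaleNr addrCA addNr addr0.
exact: gen_linear _ gZ h.
Qed.

Section Step.
Variables (d : nat) (IH : forall al S a, (mdeg al + #|S|)%N = d -> gen (monoG al S a)).
Hypothesis (hd : (2 <= d)%N).

(* [x^al1 y^S1 d_i0, x^(al2 + U_i0) y^S2 d_a]
     = +-(al2 i0 + 1) x^(al1 + al2) y^(S1 u S2) d_a, since d_a kills x^al1 y^S1. *)
Lemma gen_monoG_factor al S a al1 S1 al2 S2 :
  al = (al1 + al2)%MM -> S = S1 :|: S2 -> S1 :&: S2 = set0 ->
  (mdeg al1 + #|S1| = 2)%N -> free_of a al1 S1 ->
  (mdeg al + #|S| = d.+1)%N -> gen (monoG al S a).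
Proof.
move=> -> -> hI h1 hf hdeg.
have gX : gen (monoG al1 S1 (inl i0)) by apply: gen_monoG_small; rewrite h1.
have gY : gen (monoG (al2 + U_(i0)) S2 a).
  by apply: IH; move: hdeg; rewrite !mdegD cardsU hI cards0 subn0 mdeg1; lia.
have := gen_br gX gY.
rewrite br_monoG (dR_free_of _ _ _ hf) mulR0r fieldR0 scaler0 subr0 /= dx_mono addmK.
rewrite mulRZr mulR_mono_disj // scalerA fieldRZ => h; apply: gen_scale_inv h.
by rewrite mulf_neq0 ?sgn_neq0 // natF_neq0 // mnmDE mnm1E eqxx addn1.
Qed.

Lemma gen_monoG_two_odd al S a s1 s2 : s1 != s2 -> s1 \in S -> s2 \in S ->
  free_of a 0%MM [set s1; s2] -> (mdeg al + #|S| = d.+1)%N -> gen (monoG al S a).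
Proof.
move=> ne h1 h2 hf hdeg.
apply: (gen_monoG_factor _ _ _ 0%MM [set s1; s2] al (S :\: [set s1; s2])) => //.
- by rewrite add0m.
- apply/setP=> x; rewrite !inE.
  case: (eqVneq x s1) => [->|_]; first by rewrite h1.
  by case: (eqVneq x s2) => [->|_]; first by rewrite h2 orbT.
- by apply/setP=> x; rewrite !inE; case: (_ || _).
- by rewrite mdeg0 cards2 ne.
Qed.

Lemma gen_monoG_inr_succ al S t : (mdeg al + #|S| = d.+1)%N -> gen (monoG al S (inr t)).
Proof.
move=> hdeg.
have [S't_gt1|S't_le1] := ltnP 1 #|S :\ t|.
  case/card_gt1P: S't_gt1 => s1 [s2 [+ + ne]]; rewrite !in_setD1 => /andP[n1 h1] /andP[n2 h2].
  apply: (gen_monoG_two_odd _ _ _ s1 s2 ne) => //=.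
  by rewrite !inE negb_or eq_sym n1 eq_sym n2.
have cardS : (#|S| <= #|S :\ t| + 1)%N.
  by rewrite (cardsD1 t S) addnC leq_add2l; case: (t \in S).
have [S't_gt0|S't_0] := ltnP 0 #|S :\ t|.
  have /cards1P [s S't] : #|S :\ t| == 1%N by rewrite eqn_leq S't_le1.
  have : s \in S :\ t by rewrite S't set11.
  rewrite in_setD1 => /andP[nst sS].
  have [j hj] : exists j, (0 < al j)%N by apply: mdeg_gt0; lia.
  apply: (gen_monoG_factor _ _ _ U_(j) [set s] (al - U_(j)) (S :\ s)) => //.
  - by rewrite addm_subK // lepm1.
  - by rewrite setD1K.
  - by apply/setP=> x; rewrite !inE; case: eqP.
  - by rewrite mdeg1 cards1.
  - by rewrite /= inE eq_sym.
have [j [l hjl]] : exists j l, (U_(j) + U_(l) <= al)%MM by apply: mdeg_ge2; lia.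
apply: (gen_monoG_factor _ _ _ (U_(j) + U_(l)) set0 (al - (U_(j) + U_(l))) S) => //.
- by rewrite addm_subK.
- by rewrite set0U.
- by rewrite set0I.
- by rewrite mdegD !mdeg1 cards0.
- by rewrite /= in_set0.
Qed.

Lemma gen_monoG_inl_odd al s i : (mdeg al + 1 = d.+1)%N -> gen (monoG al [set s] (inl i)).
Proof.
move=> hdeg; have al_i := mdeg_erase i al.
have [erase_gt0|erase_0] := ltnP 0 (mdeg (mnm_erase i al)).
  have [j] := mdeg_gt0 _ erase_gt0; rewrite mnm_eraseE; case: eqP => // nji hj.
  apply: (gen_monoG_factor _ _ _ U_(j) [set s] (al - U_(j)) set0) => //.
  - by rewrite addm_subK // lepm1.
  - by rewrite setU0.
  - by rewrite setI0.
  - by rewrite mdeg1 cards1.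
  - by rewrite /= mnm1E; apply/eqP; case: eqP.
  - by rewrite cards1.
rewrite -[al]addm0; apply: gen_monoG_inl_shift.
- by rewrite mnm0E.
- lia.
- by apply: gen_monoG_small; rewrite addm0 mdeg1 cards1.
- by apply: IH; rewrite cards0; lia.
Qed.

Lemma gen_monoG_inl_even al i : (mdeg al = d.+1)%N -> gen (monoG al set0 (inl i)).
Proof.
move=> hdeg; have al_i := mdeg_erase i al.
have [erase_gt1|erase_le1] := ltnP 1 (mdeg (mnm_erase i al)).
  have [j [l hjl]] := mdeg_ge2 _ erase_gt1.
  have hle : (U_(j) + U_(l) <= al)%MM := lepm_trans hjl (lepm_erase i al).
  apply: (gen_monoG_factor _ _ _ (U_(j) + U_(l)) set0 (al - (U_(j) + U_(l))) set0) => //.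
  - by rewrite addm_subK.
  - by rewrite setU0.
  - by rewrite setI0.
  - by rewrite mdegD !mdeg1 cards0.
  - by move/mnm_lepP: hjl => /(_ i); rewrite mnm_eraseE eqxx /= leqn0.
  - by rewrite cards0 addn0.
have [erase_gt0|erase_0] := ltnP 0 (mdeg (mnm_erase i al)).
  have /mdeg1P [j /eqP hj] : mdeg (mnm_erase i al) == 1%N by rewrite eqn_leq erase_le1.
  have nji : j != i.
    by apply/eqP=> eji; have := mnm_eraseE i al i; rewrite eqxx hj eji mnm1E eqxx.
  have hjal : (0 < al j)%N.
    by have := mnm_eraseE i al j; rewrite (negbTE nji) hj mnm1E eqxx => <-.
  rewrite -(addm_subK _ _ (lepm1 _ _ hjal)) addmC; apply: gen_monoG_inl_shift.
  - by rewrite mnm1E (negbTE nji).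
  - by rewrite mnmBE mnm1E (negbTE nji) subn0; lia.
  - by apply: gen_monoG_small; rewrite mdegD !mdeg1 cards0.
  - by apply: IH; rewrite mdegB_lepm ?lepm1 // mdeg1 cards0; lia.
have hle : (U_(i) + U_(i) <= al)%MM.
  by apply/mnm_lepP => x; rewrite mnmDE mnm1E; case: eqP => [<-|nx] /=; lia.
rewrite -(addm_subK _ _ hle); apply: gen_monoG_inl_pure.
- by rewrite mnmBE mnmDE mnm1E eqxx /=; lia.
- by apply: IH; rewrite mdegB_lepm // mdegD mdeg1 cards1; lia.
- by apply: gen_monoG_inr_succ; rewrite mdegD mdegB_lepm // mdegD !mdeg1 cards1; lia.
Qed.

Lemma gen_monoG_inl_succ al S i : (mdeg al + #|S| = d.+1)%N -> gen (monoG al S (inl i)).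
Proof.
move=> hdeg; have [S_gt1|S_le1] := ltnP 1 #|S|.
  case/card_gt1P: S_gt1 => s1 [s2 [h1 h2 ne]].
  by apply: (gen_monoG_two_odd _ _ _ s1 s2 ne) => //=; rewrite mnm0E.
have [S_gt0|S_0] := ltnP 0 #|S|.
  have /cards1P [s eS] : #|S| == 1%N by rewrite eqn_leq S_le1.
  by rewrite eS cards1 in hdeg *; apply: gen_monoG_inl_odd.
have -> : S = set0 by apply/eqP; rewrite -cards_eq0; lia.
by apply: gen_monoG_inl_even; lia.
Qed.

End Step.

Lemma gen_monoG al S a : gen (monoG al S a).
Proof.
move Ed: (mdeg al + #|S|)%N => d; elim: d al S a Ed => [|d IH] al S a hd.
  by apply: gen_monoG_small; rewrite hd.
have [d_le1|d_gt1] := leqP d.+1 2; first by apply: gen_monoG_small; rewrite hd.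
case: a => [i|t]; [apply: (gen_monoG_inl_succ _ IH) | apply: (gen_monoG_inr_succ _ IH)] => //; lia.
Qed.

Lemma gen_all X : gen X.
Proof.
apply: (GG_ind (@gen F m n)) => [||al S a _]; last exact: gen_monoG.
- by apply: (gen_piece (d := 0%N)) => //; exact: gpiece0.
- by move=> c x y; apply: gen_linear.
Qed.

End Generation.

End CharZero.

End Witt.

Theorem mainTheorem14 (F : closedFieldType) (m n : nat)
  (charF : [pchar F] =i pred0) (hm : (0 < m)%N) (hn : (0 < n)%N) :
  (forall X : GG F m n, gen X) /\
  (forall gamma : GG F m n -> F, linear_g0 gamma ->
     (SI2 gamma <->
      ((forall i j : 'I_m, gamma (eb F (inl i) (inl j)) = (i == j)%:R) /\
       (forall (r : 'I_n) (j : 'I_m), gamma (eb F (inr r) (inl j)) = 0) /\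
       (forall (i : 'I_m) (t : 'I_n), gamma (eb F (inl i) (inr t)) = 0) /\
       (forall r t : 'I_n, gamma (eb F (inr r) (inr t)) = - (r == t)%:R)))) /\
  (exists gamma : GG F m n -> F, semi_infinite gamma) /\
  (forall gamma1 gamma2 : GG F m n -> F,
     semi_infinite gamma1 -> semi_infinite gamma2 ->
     forall u : GG F m n, gpiece 1 u -> gamma1 u = gamma2 u) /\
  (forall gamma : GG F m n -> F, semi_infinite gamma ->
     (forall i : 'I_m, gamma (eb F (inl i) (inl i)) = 1) /\
     (forall s : 'I_n, gamma (eb F (inr s) (inr s)) = -1)).
Proof.
have SI2E (gamma : GG F m n -> F) : linear_g0 gamma -> SI2 gamma <-> supertr_values gamma.
  move=> hl; rewrite supertr_valuesE.
  by split; [exact: SI2_supertr_eb | exact: SI2_of_supertr_eb].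
have on_g0 (gamma : GG F m n -> F) :
    semi_infinite gamma -> forall u, gpiece 1 u -> gamma u = supertr u.
  move=> [[hl _] [_ hs]]; apply: linear_g0_eq_supertr => //.
  exact: SI2_supertr_eb.
split; first exact: gen_all.
split; first exact: SI2E.
split.
  exists (@supertr F m n); split; [split|split].
  - by move=> c u v _ _; exact: supertr_linear.
  - exact: supertr_br_g0.
  - exact: gen_all.
  - by move=> X Y _ hY; exact: supertr_br.
split; first by move=> g1 g2 /on_g0 h1 /on_g0 h2 u hu; rewrite h1 // h2.
move=> gamma [[hl _] [_ hs]].
have [h1 [_ [_ h4]]] := (SI2E gamma hl).1 hs.
by split => [i|s]; [rewrite h1 eqxx | rewrite h4 eqxx].
Qed.
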